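(* Let $n\ge 3$ and $S_n$ be as defined below. The element $z=a_1a_2\cdots a_n$ is central in $S_n$. Moreover, let $\pi\colon FM_n\to S_n$ be the natural epimorphism from the free monoid on $a_1,\dots,a_n$ and let $P=zS_n$. Then $S_n\setminus P=\{a\in S_n : |\pi^{-1}(a)|=1\}$, i.e. an element of $S_n$ has a unique word representative in $FM_n$ if and only if it does not lie in $P$. Consequently the Rees quotient $S_n/P$ is isomorphic to the Rees quotient $FM_n/\pi^{-1}(P)$ (via the natural map), and $K[S_n]/K[P]$ is isomorphic to a monomial algebra (a quotient of the free algebra $K\langle a_1,\dots,a_n\rangle$ by an ideal spanned by words), for any field $K$.
   Context: For $n\ge 3$, $S_n$ denotes the monoid with generators $a_1,\dots,a_n$ and defining relations $a_1a_2\cdots a_n=a_{\sigma(1)}a_{\sigma(2)}\cdots a_{\sigma(n)}$ for all $\sigma$ in the cyclic subgroup of $\operatorname{Sym}_n$ generated by the cycle $(1,2,\dots,n)$. $K[S_n]$ denotes the monoid algebra over a field $K$, and for an ideal $I$ of $S_n$, $K[I]$ denotes the $K$-linear span of $I$ in $K[S_n]$ (an ideal of $K[S_n]$). *)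

From Stdlib Require Import Relations.
From mathcomp Require Import all_boot.
Set Implicit Arguments. Unset Strict Implicit. Unset Printing Implicit Defensive.

(* Words of the free monoid FM_n on a_1..a_n; letter a_(i+1) is i : 'I_n. *)
Definition word (n : nat) := seq 'I_n.

Definition zword (n : nat) : word n := enum 'I_n.

(* a_{sigma(1)} ... a_{sigma(n)} for sigma = (1 2 ... n)^k is the rotation rot k z. *)
Inductive srel (n : nat) : word n -> word n -> Prop :=
| SRel (u v : word n) (k : nat) : k < n ->
    srel (u ++ zword n ++ v) (u ++ rot k (zword n) ++ v).

(* The congruence on FM_n generated by the defining relations of S_n:
   congr n u v  <->  pi u = pi v in S_n. *)
Definition congr (n : nat) : relation (word n) := clos_refl_sym_trans _ (@srel n).
Arguments congr n _ _ : clear implicits.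

(* u is in pi^{-1}(P), where P = z S_n. *)
Definition inP (n : nat) (u : word n) : Prop :=
  exists w : word n, congr n u (zword n ++ w).
Arguments inP n _ : clear implicits.

From Stdlib Require Import Relations.
From mathcomp Require Import all_boot.

(* Each defining relation lets one letter pass through z, so z is central, and
   hence every word containing a cyclic rotation of z as a factor lies in
   pi^{-1}(P).  Since both sides of every defining relation contain such a
   factor, no relation can be applied to a word outside pi^{-1}(P): its class
   is a singleton.  Conversely, z w and (rot 1 z) w are distinct representatives
   of the same element of P. *)

Lemma clos_rst_isolated (A : Type) (R : relation A) (x : A) :
  (forall y, ~ R x y /\ ~ R y x) ->
  forall y, clos_refl_sym_trans A R y x -> y = x.
Proof.
move=> isolated y /(rst_sym _ _ _ _) /(clos_rst_rst1n _ _ _ _) xy.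
by case: y / xy => // x' y [Rxx' | Rx'x] _; case: (isolated x').
Qed.

Lemma rot1_zword_neq {n : nat} : 1 < n -> rot 1 (zword n) != zword n.
Proof.
move=> n_gt1; apply/eqP => /(congr1 (map val)).
rewrite map_rot /zword val_enum_ord.
by case: n n_gt1 => [|[|m]] //= _; rewrite rot1_cons.
Qed.

Section CyclicRelationMonoid.

Context {n : nat}.
Local Notation z := (zword n).
Local Notation congr := (congr n).

Lemma congr_sym {u v : word n} : congr u v -> congr v u.
Proof. exact: rst_sym. Qed.

Lemma congr_trans (u v w : word n) : congr u v -> congr v w -> congr u w.
Proof. exact: rst_trans. Qed.

Lemma congr_cat (p s : word n) {u v : word n} :
  congr u v -> congr (p ++ u ++ s) (p ++ v ++ s).
Proof.
elim=> {u v} [_ _ [u v k lt_kn]|u|u v _ IH|u v w _ IH1 _ IH2].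
- have := rst_step _ _ _ _ (SRel (p ++ u) (v ++ s) lt_kn).
  by rewrite -!catA.
- exact: rst_refl.
- exact: rst_sym.
- exact: rst_trans IH2.
Qed.

Lemma congr_rot_zword {k : nat} : k < n -> congr z (rot k z).
Proof.
move=> lt_kn.
by have := rst_step _ _ _ _ (SRel [::] [::] lt_kn); rewrite /= !cats0.
Qed.

Lemma size_zword : size z = n.
Proof. by rewrite size_enum_ord. Qed.

Lemma rot_zword_rcons (i : 'I_n) : rot i z ++ [:: i] = i :: rot i.+1 z.
Proof.
have lt_iz : i < size z by rewrite size_zword.
rewrite /rot (drop_nth i lt_iz) (take_nth i lt_iz) /zword nth_ord_enum.
by rewrite -cats1 /= catA.
Qed.

Lemma congr_zword_letter (i : 'I_n) : congr (z ++ [:: i]) (i :: z).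
Proof.
apply: (@congr_trans _ (rot i z ++ [:: i])).
  by have := congr_cat [::] [:: i] (congr_rot_zword (ltn_ord i)).
rewrite rot_zword_rcons.
have [i1_eq_n|neq_i1n] := eqVneq i.+1 n.
  by rewrite rot_oversize ?size_zword ?i1_eq_n //; apply: rst_refl.
have lt_i1n : i.+1 < n by rewrite ltn_neqAle neq_i1n ltn_ord.
by have := congr_cat [:: i] [::] (congr_sym (congr_rot_zword lt_i1n)); rewrite /= !cats0.
Qed.

Lemma zword_central (w : word n) : congr (z ++ w) (w ++ z).
Proof.
elim: w => [|i w IH]; first by rewrite cats0; apply: rst_refl.
apply: (@congr_trans _ (i :: z ++ w)).
  by have := congr_cat [::] w (congr_zword_letter i); rewrite /= -catA.
by have := congr_cat [:: i] [::] IH; rewrite /= !cats0.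
Qed.

Lemma inP_rot_factor (p s : word n) (k : nat) :
  k < n -> inP n (p ++ rot k z ++ s).
Proof.
move=> lt_kn; exists (p ++ s).
apply: (@congr_trans _ (p ++ z ++ s)).
  by apply: congr_sym; apply: congr_cat; apply: congr_rot_zword.
by have := congr_cat [::] s (congr_sym (zword_central p)); rewrite /= !catA.
Qed.

Lemma srel_inP (u v : word n) : srel u v -> inP n u /\ inP n v.
Proof.
case=> p s k lt_kn; split; last exact: inP_rot_factor.
by rewrite -(rot0 z); apply: inP_rot_factor; apply: leq_ltn_trans lt_kn.
Qed.

Lemma notinP_unique_preimage (u : word n) :
  ~ inP n u -> forall v, congr v u -> v = u.
Proof.
move=> notPu; apply: clos_rst_isolated => v.
by split=> /srel_inP [Pu Pv]; apply: notPu.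
Qed.

Lemma inP_two_preimages (u : word n) :
  1 < n -> inP n u -> exists2 v, congr v u & v <> u.
Proof.
move=> n_gt1 [w zw_u]; case: (eqVneq u (z ++ w)) => [-> | neq_u].
  exists (rot 1 z ++ w).
    by have := congr_cat [::] w (congr_sym (congr_rot_zword n_gt1)).
  by move/eqP; rewrite eqseq_cat ?size_rot // (negbTE (rot1_zword_neq n_gt1)).
by exists (z ++ w); [apply: congr_sym | apply/eqP; rewrite eq_sym].
Qed.

End CyclicRelationMonoid.

Theorem mainTheorem2 (n : nat) (hn : 3 <= n) :
  (forall w : word n, congr n (zword n ++ w) (w ++ zword n)) /\
  (forall u : word n, ~ inP n u <-> (forall v : word n, congr n v u -> v = u)) /\
  (forall u v : word n, ~ inP n u -> ~ inP n v -> congr n u v -> u = v).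
Proof.
have n_gt1 : 1 < n by apply: leq_trans hn.
split; first exact: zword_central.
split=> [u|u v notPu _ cuv]; last first.
  by apply: esym; apply: notinP_unique_preimage notPu _ (congr_sym cuv).
split; first exact: notinP_unique_preimage.
move=> uniq Pu; have [v cvu neq_vu] := inP_two_preimages u n_gt1 Pu.
exact: neq_vu (uniq v cvu).
Qed.
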